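(* Assume the setting in the context (in particular Assumption (A)). Let $\rho>0$, $r\in V_f(\rho)$ and $n\in\mathbb{R}$, and let $[z,m]=\mathcal{A}_d(r,n)$ be the output of Procedure $\mathcal{A}_d$. Then: (i) $f(z)\leq f(r)-\frac{1}{2L_f}\|g(r)\|_*^2$; (ii) $f(z)-f^*\leq\left(\frac{\bar n_\rho}{m+1}\right)^2(f(r)-f^* )$; (iii) if $n\in(0,\lceil 4\bar n_\rho\rceil]$, then $m\in[n,\lceil 4\bar n_\rho\rceil]$.
   Context: Let $f:\mathbb{R}^n\to(-\infty,\infty]$ be a proper closed convex function such that the problem $f^*=\min_{x\in\mathbb{R}^n}f(x)$ is solvable. Let $\Omega_f=\{x: f(x)=f^*\}$, fix a norm $\|\cdot\|$ on $\mathbb{R}^n$ with dual norm $\|y\|_*=\sup\{y^Tz:\|z\|\leq 1\}$, and for $x\in\mathbb{R}^n$ let $\bar x=\arg\min_{z\in\Omega_f}\|x-z\|$. For $\rho\geq0$ let $V_f(\rho)=\{x: f(x)-f^*\leq\rho\}$. Let $\mathcal{A}$ be an iterative algorithm: for $x_0\in\mathrm{dom} f$ and integer $k\geq1$, $\mathcal{A}(x_0,k)$ denotes its $k$-th iterate started from $x_0$ (and $\mathcal{A}(x_0,0)=x_0$). Assumption (A): (i) for every $\rho>0$ there is $\mu_\rho>0$ with $f(x_0)-f^*\geq\frac{\mu_\rho}{2}\|x_0-\bar x_0\|^2$ for all $x_0\in V_f(\rho)$; (ii) there exist $a_f>0$, $L_f>0$ and $g:\mathbb{R}^n\to\mathbb{R}^n$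 with $g(x)=0\iff x\in\Omega_f$ such that for every $x_0\in\mathrm{dom} f$: $f(\mathcal{A}(x_0,1))\leq f(x_0)-\frac{1}{2L_f}\|g(x_0)\|_*^2$ and $f(\mathcal{A}(x_0,k))-f^*\leq\frac{a_f}{(k+1)^2}\|x_0-\bar x_0\|^2$ for all $k\geq1$; (iii) $\bar n_\rho:=\max\{\frac12,\sqrt{2a_f/\mu_\rho}\}$. Procedure $\mathcal{A}_d(r,n)$ (input $r\in\mathrm{dom} f$, $n\in\mathbb{R}$): set $x_0=r$, $k=0$. Repeat: $k\gets k+1$; set $x_k=\mathcal{A}(x_0,k)$ if $f(\mathcal{A}(x_0,k))\leq f(x_{k-1})$, and $x_k=x_{k-1}$ otherwise; set $\ell=\lfloor k/2\rfloor$; until $k\geq n$ and $f(x_\ell)-f(x_k)\leq\frac13(f(x_0)-f(x_\ell))$. Output $z=x_k$, $m=k$. *)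

From HB Require Import structures.
From mathcomp Require Import all_boot all_order all_algebra.
From mathcomp Require Import all_classical all_reals all_analysis.
Set Implicit Arguments. Unset Strict Implicit. Unset Printing Implicit Defensive.
Import Order.TTheory GRing.Theory Num.Theory.
Import numFieldNormedType.Exports.
Local Open Scope classical_set_scope.
Local Open Scope ring_scope.

Section Defs.
Variables (R : realType) (d : nat).
Local Notation vec := 'rV[R]_d.

Definition dotv (y z : vec) : R := \sum_(i < d) y 0 i * z 0 i.

Definition is_norm (nrm : vec -> R) : Prop :=
  [/\ forall x, nrm x = 0 -> x = 0,
      forall (a : R) x, nrm (a *: x) = `|a| * nrm x &
      forall x y, nrm (x + y) <= nrm x + nrm y].

Definition dual_norm (nrm : vec -> R) (y : vec) : R :=
  sup [set dotv y z | z in [set z | nrm z <= 1]].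

Definition proper_fun (f : vec -> \bar R) : Prop :=
  (forall x, f x != -oo)%E /\ exists x, (f x < +oo)%E.

Definition closed_fun (f : vec -> \bar R) : Prop :=
  forall (x : vec) (t : R), (t%:E < f x)%E -> \forall y \near x, (t%:E < f y)%E.

Definition convex_fun (f : vec -> \bar R) : Prop :=
  forall (x y : vec) (t : R), 0 <= t <= 1 ->
    (f (t *: x + (1 - t) *: y)%R <= t%:E * f x + (1 - t)%:E * f y)%E.

Definition domf (f : vec -> \bar R) : set vec := [set x | (f x < +oo)%E].

Definition Omega (f : vec -> \bar R) (fstar : R) : set vec :=
  [set x | f x = fstar%:E].

Definition distOmega (nrm : vec -> R) (f : vec -> \bar R) (fstar : R) (x : vec) : R :=
  inf [set nrm (x - z) | z in Omega f fstar].

Definition Vf (f : vec -> \bar R) (fstar rho : R) : set vec :=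
  [set x | (f x - fstar%:E <= rho%:E)%E].

Fixpoint ad_iter (A : vec -> nat -> vec) (f : vec -> \bar R) (r : vec) (k : nat)
  : vec :=
  match k with
  | 0 => r
  | k'.+1 => if (f (A r k'.+1) <= f (ad_iter A f r k'))%E then A r k'.+1
             else ad_iter A f r k'
  end.

Definition ad_stop (A : vec -> nat -> vec) (f : vec -> \bar R) (r : vec) (n : R)
  (k : nat) : Prop :=
  n <= k%:R /\
  (f (ad_iter A f r k./2) - f (ad_iter A f r k)
     <= (3^-1)%:E * (f (ad_iter A f r 0) - f (ad_iter A f r k./2)))%E.

Definition ad_output (A : vec -> nat -> vec) (f : vec -> \bar R) (r : vec) (n : R)
  (m : nat) : Prop :=
  (1 <= m)%N /\ ad_stop A f r n m /\
  forall k, (1 <= k)%N -> (k < m)%N -> ~ ad_stop A f r n k.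

Definition nbar (af mu : R) : R := Num.max (2^-1) (Num.sqrt (2 * af / mu)).

End Defs.

From HB Require Import structures.
From mathcomp Require Import all_boot all_order all_algebra.
From mathcomp Require Import all_classical all_reals all_analysis.
From mathcomp Require Import ring lra zify.
Set Implicit Arguments. Unset Strict Implicit. Unset Printing Implicit Defensive.
Import Order.TTheory GRing.Theory Num.Theory.
Import numFieldNormedType.Exports.
Local Open Scope classical_set_scope.
Local Open Scope ring_scope.

(* The iterates x_k of A_d never increase f and satisfy f(x_k) <= f(A(r,k)), so
   (A)(i)-(ii) give f(x_k) - fstar <= (nbar/(k+1))^2 (f(r) - fstar).  Once
   k >= 4 nbar, the half-way iterate x_{k/2} has already closed three quarters of
   the gap f(r) - fstar, which is exactly what the stopping test of A_d asks for;
   hence A_d stops, and no later than at the first such k. *)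

Lemma gap_le_third_of_descent (R : realFieldType) (s a b c : \bar R) :
  s \is a fin_num -> c \is a fin_num -> (s <= a)%E -> (a <= b)%E -> (b <= c)%E ->
  (b - s <= (4^-1)%:E * (c - s))%E -> (b - a <= (3^-1)%:E * (c - b))%E.
Proof.
case: s c => [s||] [c||] //= _ _; case: a => [a||] //; case: b => [b||] //.
by rewrite !lee_fin; lra.
Qed.

Lemma rate_of_quadratic_growth (R : realFieldType) (af mu nb D G k : R) :
  0 < mu -> 0 <= af -> 2 * af / mu <= nb ^+ 2 -> mu / 2 * D ^+ 2 <= G ->
  af / k ^+ 2 * D ^+ 2 <= (nb / k) ^+ 2 * G.
Proof.
move=> mu_gt0 af_ge0 af_le growth.
rewrite expr_div_n mulrAC [X in _ <= X]mulrAC ler_wpM2r ?invr_ge0 ?sqr_ge0 //.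
have -> : af * D ^+ 2 = 2 * af / mu * (mu / 2 * D ^+ 2).
  by field; rewrite gt_eqF.
apply: ler_pM => //; first by rewrite !(divr_ge0, mulr_ge0) // ltW.
by rewrite mulr_ge0 ?sqr_ge0 // divr_ge0 // ltW.
Qed.

Lemma nbar_ge_half (R : realType) (af mu : R) : 2^-1 <= nbar af mu.
Proof. by rewrite /nbar le_max lexx. Qed.

Lemma sqr_nbar_ge (R : realType) (af mu : R) :
  0 <= 2 * af / mu -> 2 * af / mu <= nbar af mu ^+ 2.
Proof.
move=> h; rewrite -[X in X <= _](sqr_sqrtr h) ler_sqr ?nnegrE ?sqrtr_ge0 //.
  by rewrite /nbar le_max lexx orbT.
by rewrite (le_trans _ (nbar_ge_half af mu)).
Qed.

Lemma sqr_rate_at_half_le (R : realFieldType) (nb : R) (k : nat) :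
  0 <= nb -> 4 * nb <= k%:R -> (nb / (k./2).+1%:R) ^+ 2 <= 4^-1.
Proof.
move=> nb_ge0 k_ge.
have k_le : k%:R <= 2 * (k./2).+1%:R :> R by rewrite -natrM ler_nat; lia.
have l_gt0 : 0 < (k./2).+1%:R :> R by rewrite ltr0n.
have q_le : nb / (k./2).+1%:R <= 2^-1 by rewrite ler_pdivrMr //; lra.
have -> : 4^-1 = 2^-1 ^+ 2 :> R by rewrite expr2 -invfM -natrM.
by rewrite ler_sqr ?nnegrE ?divr_ge0 //; lra.
Qed.

Lemma ceil_nat (R : archiRealDomainType) (y : R) :
  0 <= y -> exists2 K : nat, (Num.ceil y)%:~R = K%:R :> R & y <= K%:R.
Proof.
move=> y_ge0; have c_ge0 : 0 <= Num.ceil y by rewrite ceil_ge0; lra.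
exists `|Num.ceil y|%N; first by rewrite natr_absz ger0_norm.
by rewrite natr_absz ger0_norm // ceil_ge.
Qed.

Lemma Vf_fin_num (R : realType) (d : nat) (f : 'rV[R]_d -> \bar R) (fstar rho : R)
    (y : 'rV[R]_d) :
  (fstar%:E <= f y)%E -> Vf f fstar rho y -> f y \is a fin_num.
Proof. by rewrite /Vf /=; case: (f y). Qed.

Section ProcedureAd.
Variables (R : realType) (d : nat).
Variables (A : 'rV[R]_d -> nat -> 'rV[R]_d) (f : 'rV[R]_d -> \bar R) (r : 'rV[R]_d).
Local Notation x := (ad_iter A f r).

Lemma ad_iter_nonincreasing :
  {homo (fun k => f (x k)) : i j / (i <= j)%N >-> (j <= i)%E}.
Proof. by apply/nonincreasing_seqP => k /=; case: ifP. Qed.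

Lemma ad_iter_le_start k : (f (x k) <= f r)%E.
Proof. exact: (ad_iter_nonincreasing (leq0n k)). Qed.

Lemma ad_iter_le_A k : (0 < k)%N -> (f (x k) <= f (A r k))%E.
Proof. by case: k => // k _ /=; case: ifP => // /negbT; rewrite -ltNge => /ltW. Qed.

Lemma ad_output_min n m k :
  ad_output A f r n m -> (0 < k)%N -> ad_stop A f r n k -> (m <= k)%N.
Proof.
move=> [_ [_ first]] k_gt0 stop_k; rewrite leqNgt; apply/negP => km.
exact: first k k_gt0 km stop_k.
Qed.

Lemma ad_output_exists n k :
  (0 < k)%N -> ad_stop A f r n k -> exists m, ad_output A f r n m.
Proof.
move=> k_gt0 stop_k; pose P j := `[< (0 < j)%N /\ ad_stop A f r n j >].
have exP : exists j, P j by exists k; apply/asboolP.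
case: (ex_minnP exP) => m /asboolP [m_gt0 stop_m] m_min.
exists m; split=> //; split=> // j j_gt0 jm stop_j.
by have := m_min j (asboolT (conj j_gt0 stop_j)); rewrite leqNgt jm.
Qed.

Variable fstar : R.
Hypothesis f_ge : forall y, (fstar%:E <= f y)%E.
Hypothesis fr_fin : f r \is a fin_num.

Lemma ad_iter_rate (af mu D : R) :
  0 < mu -> 0 <= af -> ((mu / 2 * D ^+ 2)%:E <= f r - fstar%:E)%E ->
  (forall k, (0 < k)%N ->
     (f (A r k) - fstar%:E <= (af / (k.+1%:R ^+ 2) * D ^+ 2)%:E)%E) ->
  forall k, (0 < k)%N ->
    (f (x k) - fstar%:E <= ((nbar af mu / k.+1%:R) ^+ 2)%:E * (f r - fstar%:E))%E.
Proof.
move=> mu_gt0 af_ge0 growth accel k k_gt0.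
apply: le_trans (leeB (ad_iter_le_A k_gt0) (lexx _)) _.
apply: (le_trans (accel k k_gt0)).
move: growth; rewrite -(fineK fr_fin) -EFinB -EFinM !lee_fin.
apply: rate_of_quadratic_growth => //.
by apply: sqr_nbar_ge; rewrite !(divr_ge0, mulr_ge0) // ltW.
Qed.

Lemma ad_stop_of_rate (c : nat -> R) n k :
  (forall l, (0 < l)%N -> (f (x l) - fstar%:E <= (c l)%:E * (f r - fstar%:E))%E) ->
  n <= k%:R -> (0 < k./2)%N -> c k./2 <= 4^-1 -> ad_stop A f r n k.
Proof.
move=> rate n_le half_gt0 c_le; split => //=.
apply: (gap_le_third_of_descent _ fr_fin (f_ge _)) => //.
- by apply: ad_iter_nonincreasing; lia.
- exact: ad_iter_le_start.
apply: (le_trans (rate _ half_gt0)); apply: lee_wpmul2r; last by rewrite lee_fin.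
by rewrite subre_ge0.
Qed.

End ProcedureAd.

Theorem mainTheorem2 (R : realType) (d : nat)
  (f : 'rV[R]_d -> \bar R) (fstar : R) (nrm : 'rV[R]_d -> R)
  (A : 'rV[R]_d -> nat -> 'rV[R]_d)
  (mu : R -> R) (af Lf : R) (g : 'rV[R]_d -> 'rV[R]_d)
  (* f proper closed convex, problem solvable with optimal value fstar *)
  (Hprop : proper_fun f) (Hclosed : closed_fun f) (Hconv : convex_fun f)
  (Hsolv : exists xs, f xs = fstar%:E)
  (Hmin : forall x, (fstar%:E <= f x)%E)
  (Hnorm : is_norm nrm)
  (HA0 : forall x0, A x0 0%N = x0)
  (* Assumption (A)(i) *)
  (HAi : forall rho : R, 0 < rho -> 0 < mu rho /\
     forall x0, Vf f fstar rho x0 ->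
       ((mu rho / 2 * distOmega nrm f fstar x0 ^+ 2)%:E <= f x0 - fstar%:E)%E)
  (* Assumption (A)(ii) *)
  (Haf : 0 < af) (HLf : 0 < Lf)
  (Hg : forall x, g x = 0 <-> Omega f fstar x)
  (HAii1 : forall x0, domf f x0 ->
     (f (A x0 1%N) <= f x0 - ((2 * Lf)^-1 * dual_norm nrm (g x0) ^+ 2)%:E)%E)
  (HAii2 : forall x0, domf f x0 -> forall k : nat, (1 <= k)%N ->
     (f (A x0 k) - fstar%:E
        <= (af / (k.+1%:R ^+ 2) * distOmega nrm f fstar x0 ^+ 2)%:E)%E)
  (rho : R) (Hrho : 0 < rho) (r : 'rV[R]_d) (Hr : Vf f fstar rho r) (n : R) :
  (* the procedure A_d(r, n) terminates *)
  (exists m, ad_output A f r n m) /\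
  (* and its output [z, m] = [x_m, m] satisfies (i)-(iii) *)
  forall m, ad_output A f r n m ->
    let z := ad_iter A f r m in
    let nb := nbar af (mu rho) in
    [/\ (f z <= f r - ((2 * Lf)^-1 * dual_norm nrm (g r) ^+ 2)%:E)%E,
        (f z - fstar%:E <= ((nb / m.+1%:R) ^+ 2)%:E * (f r - fstar%:E))%E &
        (0 < n -> n <= ((Num.ceil (4 * nb))%:~R : R) ->
           n <= m%:R /\ m%:R <= ((Num.ceil (4 * nb))%:~R : R))].
Proof.
have [mu_gt0 growth] := HAi rho Hrho.
have fr_fin : f r \is a fin_num := Vf_fin_num (Hmin r) Hr.
have r_dom : domf f r by rewrite /domf /= ltey; case/fin_numP: fr_fin.
have rate := ad_iter_rate (f := f) (r := r) fr_fin mu_gt0 (ltW Haf)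
  (growth r Hr) (HAii2 r r_dom).
set nb := nbar af (mu rho); have nb_ge : 2^-1 <= nb := nbar_ge_half _ _.
have stop k : 4 * nb <= k%:R -> n <= k%:R -> ad_stop A f r n k.
  move=> k_ge n_le; apply: (ad_stop_of_rate Hmin fr_fin rate n_le).
    by rewrite half_gt0 -(ltr_nat R); lra.
  by apply: sqr_rate_at_half_le k_ge; lra.
split.
  have n_le := ler_norm n; have n_norm_ge0 := normr_ge0 n.
  have /ceil_nat[K _ K_ge] : 0 <= 4 * nb + `|n| by lra.
  apply: (ad_output_exists (k := K)); last by apply: stop; lra.
  by rewrite -(ltr_nat R); lra.
move=> m out z nb'; rewrite {}/z {}/nb'; split.
- apply: le_trans (ad_iter_nonincreasing A f r out.1) _.
  exact: le_trans (ad_iter_le_A A f r (ltn0Sn 0)) (HAii1 r r_dom).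
- exact: rate m out.1.
- have /ceil_nat[K -> K_ge] : 0 <= 4 * nb by lra.
  move=> n_gt0 n_le.
  split; first exact: out.2.1.1.
  rewrite ler_nat (ad_output_min out) //; last exact: stop K_ge n_le.
  by rewrite -(ltr_nat R); lra.
Qed.
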